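(* Let $p>0$ and suppose $\mathbb{E}|Y_0|^p<\infty$ and $\mathbb{E}|\varepsilon_1|^p<\infty$. Consider the TAR(1) model $Y_t=Y_{t-1}+\varepsilon_t$ if $Y_{t-1}>r$, $Y_t=\beta Y_{t-1}+\varepsilon_t$ if $Y_{t-1}\le r$ ($t\ge1$), with $\beta<1$ and $r\in\mathbb{R}$. Then there is a constant $C$ (depending only on $p,\beta,r$, not on $n$ or on the event) such that for every $n\ge 0$ and every event $A$, $$\mathbb{E}|Y_n|^pI\{Y_n\le r, A\}\le C\Big(\sup_k\mathbb{E}|\varepsilon_k|^pI\{A\}+\mathbb{E}|Y_0|^pI\{A\}+\mathbb{P}(A)\Big).$$
   Context: Standing assumptions: $\{\varepsilon_t\}_{t\ge1}$ is an i.i.d. sequence of real random variables with $\mathbb{E}\varepsilon_1=0$ and $\mathbb{E}\varepsilon_1^2=\sigma^2\in(0,\infty)$; the initial value $Y_0$ is a random variable independent of $\{\varepsilon_t\}_{t\ge1}$. $I\{\cdot\}$ denotes an indicator, and $I\{Y_n\le r,A\}$ the indicator of $\{Y_n\le r\}\cap A$. *)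

From HB Require Import structures.
From mathcomp Require Import all_boot all_order all_algebra.
From mathcomp Require Import all_classical all_reals all_analysis.
Set Implicit Arguments. Unset Strict Implicit. Unset Printing Implicit Defensive.
Import Order.TTheory GRing.Theory Num.Theory.
Local Open Scope classical_set_scope.
Local Open Scope ring_scope.

Fixpoint tar {T : Type} {R : realType} (beta r : R) (Y0 : T -> R)
    (eps : nat -> T -> R) (n : nat) (x : T) : R :=
  match n with
  | 0%N => Y0 x
  | m.+1 => let y := tar beta r Y0 eps m x in
            (if r < y then y else beta * y) + eps m.+1 x
  end.

Definition init_innov_family {T : Type} {R : Type} (Y0 : T -> R)
    (eps : nat -> T -> R) (i : nat) : T -> R :=
  if i == 0%N then Y0 else eps i.

Definition mutually_independent {d} {T : measurableType d} {R : realType}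
    (P : probability T R) (X : nat -> T -> R) : Prop :=
  forall (S : seq nat) (B : nat -> set R),
    uniq S -> (forall i, measurable (B i)) ->
    P (\bigcap_(i in [set` S]) (X i @^-1` B i)) =
    (\prod_(i <- S) P (X i @^-1` B i))%E.

Definition identically_distributed {d} {T : measurableType d} {R : realType}
    (P : probability T R) (eps : nat -> {RV P >-> R}) : Prop :=
  forall i, (0 < i)%N -> distribution P (eps i) = distribution P (eps 1%N).

From HB Require Import structures.
From mathcomp Require Import all_boot all_order all_algebra.
From mathcomp Require Import all_classical all_reals all_analysis measurable_realfun.
From mathcomp Require Import ring lra.
Import Order.TTheory GRing.Theory Num.Theory.
Set Implicit Arguments. Unset Strict Implicit. Unset Printing Implicit Defensive.
Local Open Scope classical_set_scope.
Local Open Scope ring_scope.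

(* Let G z := |z|^p I{z <= r}. Pathwise, G(Y_{n+1}) <= q G(Y_n) + K1 |eps_{n+1}|^p + K2
   with q < 1: below the threshold with beta >= 0 the map y |-> beta y + e contracts,
   and in every other case a value Y_{n+1} <= r is bounded below by r + eps_{n+1} or by
   beta r + eps_{n+1}, so that |Y_{n+1}| <= |eps_{n+1}| + |r| + |beta r|.
   Integrating over A gives a_{n+1} <= q a_n + (K1 + K2) X for a_n := E G(Y_n) I{A} and
   X the bracket on the right-hand side, whence a_n <= C X for C = max(1, (K1 + K2)/(1 - q)). *)

Section PowerInequalities.
Variables (R : realType) (p : R).
Hypothesis p_gt0 : 0 < p.

Lemma ler_powR2r {a b : R} : 0 <= a -> a <= b -> a `^ p <= b `^ p.
Proof.
move=> a_ge0 ab; apply: (ge0_ler_powR (ltW p_gt0)) => //; rewrite nnegrE //.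
exact: le_trans ab.
Qed.

Lemma powR_le_addr_of_le_max (a b c : R) : 0 <= a -> 0 <= b -> 0 <= c ->
  a <= Num.max b c -> a `^ p <= b `^ p + c `^ p.
Proof.
move=> a_ge0 b_ge0 c_ge0 /(ler_powR2r a_ge0) /le_trans; apply.
by have [_|_] := leP b c; rewrite ?lerDr ?lerDl powR_ge0.
Qed.

Lemma powR_addr_le (a b : R) : 0 <= a -> 0 <= b ->
  (a + b) `^ p <= 2 `^ p * (a `^ p + b `^ p).
Proof.
move=> a_ge0 b_ge0; rewrite mulrDr -!powRM ?ler0n //.
apply: powR_le_addr_of_le_max; rewrite ?addr_ge0 ?mulr_ge0 // le_max.
by have [ab|ba] := leP a b; [rewrite orbC|]; apply/orP; left; lra.
Qed.

Lemma powR_affine_le (beta x y : R) : 0 <= beta < 1 -> 0 <= x -> 0 <= y ->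
  (beta * x + y) `^ p <=
    ((1 + beta) / 2) `^ p * x `^ p + (2 / (1 - beta)) `^ p * y `^ p.
Proof.
move=> /andP[b_ge0 b_lt1] x_ge0 y_ge0.
have k_gt0 : 0 < 2 / (1 - beta) by apply: divr_gt0; lra.
rewrite -!powRM ?mulr_ge0 ?addr_ge0 ?(ltW k_gt0) //; try lra.
apply: powR_le_addr_of_le_max; rewrite ?addr_ge0 ?mulr_ge0 ?(ltW k_gt0) //; try lra.
rewrite le_max; have [small|large] := leP y ((1 - beta) / 2 * x).
  by apply/orP; left; lra.
apply/orP; right.
have x_le : x <= 2 / (1 - beta) * y.
  by rewrite mulrAC ler_pdivlMr; lra.
have : beta * x <= beta * (2 / (1 - beta) * y) by exact: ler_wpM2l.
have -> : beta * (2 / (1 - beta) * y) = 2 / (1 - beta) * y - 2 * y.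
  by field; lra.
lra.
Qed.

End PowerInequalities.

Section TarStep.
Variables (R : realType) (p beta r : R).
Hypotheses (p_gt0 : 0 < p) (beta_lt1 : beta < 1).

Definition pow_below (z : R) : R := if z <= r then `|z| `^ p else 0.

Definition tar_map (y : R) : R := if r < y then y else beta * y.

Let beta_pos := Num.max beta 0.

Definition tar_rate : R := ((1 + beta_pos) / 2) `^ p.
Definition tar_innov_coef : R := (2 / (1 - beta_pos)) `^ p + 2 `^ p.
Definition tar_offset : R := 2 `^ p * (`|r| + `|beta * r|) `^ p.

Lemma pow_below_ge0 z : 0 <= pow_below z.
Proof. by rewrite /pow_below; case: ifP => // _; exact: powR_ge0. Qed.

Lemma pow_below_le z : pow_below z <= `|z| `^ p.
Proof. by rewrite /pow_below; case: ifP => // _; exact: powR_ge0. Qed.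

Lemma tar_rate_ge0 : 0 <= tar_rate. Proof. exact: powR_ge0. Qed.

Lemma tar_rate_lt1 : tar_rate < 1.
Proof.
have beta_pos_ge0 : 0 <= beta_pos by rewrite le_max lexx orbT.
have beta_pos_lt1 : beta_pos < 1 by rewrite gt_max beta_lt1 ltr01.
have := gt0_ltr_powR p_gt0 (x := (1 + beta_pos) / 2) (y := 1).
by rewrite powR1; apply; rewrite ?nnegrE; lra.
Qed.

Lemma tar_innov_coef_ge0 : 0 <= tar_innov_coef.
Proof. by rewrite addr_ge0 ?powR_ge0. Qed.

Lemma tar_offset_ge0 : 0 <= tar_offset.
Proof. by rewrite mulr_ge0 ?powR_ge0. Qed.

Definition tar_moment_const : R :=
  Num.max 1 ((tar_innov_coef + tar_offset) / (1 - tar_rate)).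

Lemma tar_moment_const_ge1 : 1 <= tar_moment_const.
Proof. by rewrite le_max lexx. Qed.

Lemma tar_moment_const_fixpoint :
  tar_rate * tar_moment_const + (tar_innov_coef + tar_offset) <= tar_moment_const.
Proof.
have := tar_rate_ge0; have := tar_rate_lt1; have := tar_moment_const_ge1 => ? ? ?.
have : (tar_innov_coef + tar_offset) / (1 - tar_rate) <= tar_moment_const.
  by rewrite le_max lexx orbT.
by rewrite ler_pdivrMr; [nra | lra].
Qed.

Lemma norm_tar_map_add_le y e : tar_map y + e <= r -> (r < y) || (beta < 0) ->
  `|tar_map y + e| <= `|e| + (`|r| + `|beta * r|).
Proof.
rewrite /tar_map => below.
have /ler_normlP[? ?] : `|e| <= `|e| := lexx _.
have /ler_normlP[? ?] : `|r| <= `|r| := lexx _.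
have /ler_normlP[? ?] : `|beta * r| <= `|beta * r| := lexx _.
case: ifPn below => [ry|/negbTE ry] below /= cases; rewrite ler_norml.
  by apply/andP; split; lra.
have : beta * r <= beta * y by rewrite ler_wnM2l //; [exact: ltW | rewrite leNgt ry].
by move=> ?; apply/andP; split; lra.
Qed.

Lemma pow_below_tar_step y e :
  pow_below (tar_map y + e) <=
    tar_rate * pow_below y + tar_innov_coef * `|e| `^ p + tar_offset.
Proof.
have qG_ge0 : 0 <= tar_rate * pow_below y by rewrite mulr_ge0 ?tar_rate_ge0 ?pow_below_ge0.
have e_ge0 : 0 <= `|e| `^ p := powR_ge0 _ _.
have k_ge0 : 0 <= (2 / (1 - beta_pos)) `^ p := powR_ge0 _ _.
have two_ge0 : 0 <= 2 `^ p := powR_ge0 _ _.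
rewrite {1}/pow_below; case: ifPn => [below|_]; last first.
  by rewrite addr_ge0 ?tar_offset_ge0 // addr_ge0 // mulr_ge0 ?tar_innov_coef_ge0.
have [escape|contract] := boolP ((r < y) || (beta < 0)).
  have c_ge0 : 0 <= `|r| + `|beta * r| by rewrite addr_ge0.
  apply: le_trans (ler_powR2r p_gt0 (normr_ge0 _) (norm_tar_map_add_le below escape)) _.
  apply: le_trans (powR_addr_le p_gt0 (normr_ge0 e) c_ge0) _.
  rewrite /tar_innov_coef /tar_offset; nra.
move: contract; rewrite negb_or -!leNgt => /andP[yr beta_ge0].
have beta_posE : beta_pos = beta by rewrite /beta_pos max_l.
have beta_bounds : 0 <= beta < 1 by rewrite beta_ge0 beta_lt1.
have affine := powR_affine_le p_gt0 beta_bounds (normr_ge0 y) (normr_ge0 e).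
have norm_le : `|beta * y + e| <= beta * `|y| + `|e|.
  by apply: le_trans (ler_normD _ _) _; rewrite normrM ger0_norm.
rewrite /tar_map ltNge yr /= in below *.
apply: le_trans (ler_powR2r p_gt0 (normr_ge0 _) norm_le) _.
apply: le_trans affine _.
rewrite /pow_below yr /tar_rate /tar_innov_coef -/beta_pos beta_posE.
have := tar_offset_ge0; rewrite mulrDl; nra.
Qed.

End TarStep.

Lemma affine_recursion_le (R : realType) (a : nat -> \bar R) (q c C : R) (X : \bar R) :
  0 <= q -> 0 <= c -> 1 <= C -> q * C + c <= C -> (0%E <= X)%E -> (a 0%N <= X)%E ->
  (forall n, a n.+1 <= q%:E * a n + c%:E * X)%E ->
  forall n, (a n <= C%:E * X)%E.
Proof.
move=> q_ge0 c_ge0 C_ge1 fixpoint X_ge0 a0 aS; elim=> [|n IH].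
  by apply: le_trans a0 _; rewrite -[leLHS]mul1e lee_wpmul2r // lee_fin.
apply: le_trans (aS n) _.
have : (q%:E * a n <= (q * C)%:E * X)%E.
  by rewrite EFinM -muleA lee_wpmul2l // lee_fin.
move/(leeD2r (c%:E * X)) /le_trans; apply.
rewrite -ge0_muleDl ?lee_fin ?mulr_ge0 //; last lra.
by rewrite lee_wpmul2r // lee_fin.
Qed.

Section TarMoments.
Variables (R : realType) (p beta r : R).
Hypotheses (p_gt0 : 0 < p) (beta_lt1 : beta < 1).
Variables (d : measure_display) (T : measurableType d) (mu : {measure set T -> \bar R}).
Variables (Y0 : T -> R) (eps : nat -> T -> R).
Hypotheses (mY0 : measurable_fun setT Y0) (meps : forall n, measurable_fun setT (eps n)).

Let Y n := tar beta r Y0 eps n.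

Lemma measurable_pow_below : measurable_fun setT (pow_below p r).
Proof.
apply: measurable_fun_ifT; last exact: measurable_cst.
  exact: (measurable_fun_ler (f := id) (g := cst r)).
exact: measurableT_comp (measurable_powR p) (@normr_measurable R setT).
Qed.

Lemma measurable_tar n : measurable_fun setT (Y n).
Proof.
elim: n => [//|n IH]; apply: measurable_funD => //.
apply: measurable_fun_ifT => //; first exact: measurable_fun_ltr.
exact: measurable_funM.
Qed.

Lemma measurable_norm_powR (f : T -> R) : measurable_fun setT f ->
  measurable_fun setT (fun x => `|f x| `^ p).
Proof.
move=> mf; apply: measurableT_comp (measurable_powR p) _.
exact: measurableT_comp (@normr_measurable R setT) mf.
Qed.

Variables (A : set T) (mA : measurable A).

Lemma integral_pow_below_tar n :
  (\int[mu]_(x in A `&` [set x | (Y n x <= r)%R]) (`|Y n x| `^ p)%:E =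
   \int[mu]_(x in A) (pow_below p r (Y n x))%:E)%E.
Proof.
rewrite integral_mkcondr; apply: eq_integral => x _.
rewrite patchE /pow_below; case: ifPn => [/set_mem -> //|/negP Ynr].
by case: ifPn => // below; exfalso; apply: Ynr; exact: mem_set.
Qed.

Lemma integral_pow_below_tar0 :
  (\int[mu]_(x in A) (pow_below p r (Y 0 x))%:E <= \int[mu]_(x in A) (`|Y0 x| `^ p)%:E)%E.
Proof.
apply: ge0_le_integral => //.
- by move=> x _; rewrite lee_fin pow_below_ge0.
- exact/measurable_EFinP/measurable_funTS/(measurableT_comp measurable_pow_below (measurable_tar _)).
- exact/measurable_EFinP/measurable_funTS/measurable_norm_powR.
- by move=> x _; rewrite lee_fin pow_below_le.
Qed.

Lemma integral_pow_below_tarS n :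
  (\int[mu]_(x in A) (pow_below p r (Y n.+1 x))%:E <=
     (tar_rate p beta)%:E * \int[mu]_(x in A) (pow_below p r (Y n x))%:E
     + (tar_innov_coef p beta)%:E * \int[mu]_(x in A) (`|eps n.+1 x| `^ p)%:E
     + (tar_offset p beta r)%:E * mu A)%E.
Proof.
set q := tar_rate p beta; set K1 := tar_innov_coef p beta; set K2 := tar_offset p beta r.
have q_ge0 : 0 <= q := tar_rate_ge0 p beta.
have K1_ge0 : 0 <= K1 := tar_innov_coef_ge0 p beta.
have K2_ge0 : 0 <= K2 := tar_offset_ge0 p beta r.
have mG k : measurable_fun A (fun x => (pow_below p r (Y k x))%:E).
  exact/measurable_EFinP/measurable_funTS/(measurableT_comp measurable_pow_below (measurable_tar _)).
have mE : measurable_fun A (fun x => (`|eps n.+1 x| `^ p)%:E).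
  exact/measurable_EFinP/measurable_funTS/measurable_norm_powR.
have G_ge0 k x : (0 <= (pow_below p r (Y k x))%:E)%E by rewrite lee_fin pow_below_ge0.
have E_ge0 x : (0 <= (`|eps n.+1 x| `^ p)%:E)%E by rewrite lee_fin powR_ge0.
pose bound x := ((q * pow_below p r (Y n x))%:E + (K1 * `|eps n.+1 x| `^ p)%:E + K2%:E)%E.
have mqG : measurable_fun A (fun x => (q * pow_below p r (Y n x))%:E).
  by under eq_fun do rewrite EFinM; exact: emeasurable_funM.
have mK1E : measurable_fun A (fun x => (K1 * `|eps n.+1 x| `^ p)%:E).
  by under eq_fun do rewrite EFinM; exact: emeasurable_funM.
apply: (@le_trans _ _ (\int[mu]_(x in A) bound x)%E).
  apply: ge0_le_integral => //.
  - by apply: emeasurable_funD => //; exact: emeasurable_funD.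
  - by move=> x _; rewrite /bound -!EFinD lee_fin; exact: pow_below_tar_step.
rewrite /bound ge0_integralD //; last 2 first.
- by move=> x _; rewrite -EFinD lee_fin addr_ge0 ?mulr_ge0 ?pow_below_ge0 ?powR_ge0.
- exact: emeasurable_funD.
rewrite ge0_integralD //; last 2 first.
- by move=> x _; rewrite lee_fin mulr_ge0 ?pow_below_ge0.
- by move=> x _; rewrite lee_fin mulr_ge0 ?powR_ge0.
rewrite integral_cst //.
under eq_integral do rewrite EFinM.
under [X in (_ + X + _)%E]eq_integral do rewrite EFinM.
by rewrite !ge0_integralZl_EFin //; apply/measurable_EFinP.
Qed.

Lemma integral_pow_below_tar_le (S : \bar R) n :
  (forall k, (0 < k)%N -> \int[mu]_(x in A) (`|eps k x| `^ p)%:E <= S)%E ->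
  (\int[mu]_(x in A `&` [set x | (Y n x <= r)%R]) (`|Y n x| `^ p)%:E <=
     (tar_moment_const p beta r)%:E * (S + \int[mu]_(x in A) (`|Y0 x| `^ p)%:E + mu A))%E.
Proof.
move=> eps_le_S; rewrite integral_pow_below_tar.
have pow_ge0 (f : T -> R) : (0 <= \int[mu]_(x in A) (`|f x| `^ p)%:E)%E.
  by apply: integral_ge0 => x _; rewrite lee_fin powR_ge0.
have S_ge0 : (0 <= S)%E := le_trans (pow_ge0 _) (eps_le_S 1%N isT).
have muA_ge0 : (0 <= mu A)%E := measure_ge0 mu A.
pose a m := (\int[mu]_(x in A) (pow_below p r (Y m x))%:E)%E.
apply: (affine_recursion_le (a := a)) (tar_rate_ge0 p beta) _ (tar_moment_const_ge1 p beta r)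
  (tar_moment_const_fixpoint r p_gt0 beta_lt1) _ _ _ n.
- by rewrite addr_ge0 ?tar_innov_coef_ge0 ?tar_offset_ge0.
- by rewrite adde_ge0 // adde_ge0.
- apply: le_trans integral_pow_below_tar0 _.
  by rewrite -addeA addeCA; apply: leeDl; rewrite adde_ge0.
move=> k; apply: le_trans (integral_pow_below_tarS k) _.
rewrite -[leLHS]addeA; apply: leeD2l.
rewrite (EFinD (tar_innov_coef p beta)) ge0_muleDl ?lee_fin ?tar_innov_coef_ge0 ?tar_offset_ge0 //.
apply: leeD; apply: lee_wpmul2l; rewrite ?lee_fin ?tar_innov_coef_ge0 ?tar_offset_ge0 //.
- apply: le_trans (eps_le_S k.+1 isT) _.
  by rewrite -addeA; apply: leeDl; rewrite adde_ge0.
- by apply: leeDr; rewrite adde_ge0.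
Qed.

End TarMoments.

Theorem lemma3p1 (R : realType) (p beta r : R) :
  0 < p -> beta < 1 ->
  exists C : R, 0 < C /\
  forall (d : measure_display) (T : measurableType d) (P : probability T R)
    (Y0 : {RV P >-> R}) (eps : nat -> {RV P >-> R}),
    identically_distributed eps ->
    mutually_independent P (init_innov_family (fun x => Y0 x) (fun i x => eps i x)) ->
    P.-integrable setT (fun x => ((eps 1%N x) ^+ 2)%:E) ->
    'E_P[eps 1%N]%E = 0%E ->
    (0 < 'V_P[eps 1%N])%E ->
    (\int[P]_x (`|Y0 x| `^ p)%:E < +oo)%E ->
    (\int[P]_x (`|eps 1%N x| `^ p)%:E < +oo)%E ->
    forall (n : nat) (A : set T), measurable A ->
      (\int[P]_(x in A `&` [set x | (tar beta r Y0 (fun i => eps i) n x <= r)%R])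
          (`|tar beta r Y0 (fun i => eps i) n x| `^ p)%:E
       <= C%:E * (ereal_sup [set (\int[P]_(x in A) (`|eps k x| `^ p)%:E)
                             | k in [set k : nat | (0 < k)%N]]
                  + \int[P]_(x in A) (`|Y0 x| `^ p)%:E
                  + P A))%E.
Proof.
move=> p_gt0 beta_lt1; exists (tar_moment_const p beta r).
split; first exact: lt_le_trans ltr01 (tar_moment_const_ge1 p beta r).
move=> d T P Y0 eps _ _ _ _ _ _ _ n A mA.
apply: integral_pow_below_tar_le => //; try exact: measurable_funPT.
by move=> k k_gt0; apply: ereal_sup_ubound; exists k.
Qed.
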